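(* Let $\widehat G$ be a signed ribbon graph and let $L=L_{\widehat G}\subset G\times I$ be the corresponding signed medial link, with diagram $\widetilde L=\widetilde L_{\widehat G}$, endowed with an orientation. Then $$J_L(t)=(-1)^{w(\widetilde L)}\,t^{\frac{3w(\widetilde L)-r(\widehat G)+n(\widehat G)}{4}}\,\bigl(-t^{1/2}-t^{-1/2}\bigr)^{k(\widehat G)-1}\,R_{\widehat G}\Bigl(-t-1,\,-t^{-1}-1,\,\frac{1}{-t^{1/2}-t^{-1/2}}\Bigr).$$ In particular, if $\widehat G$ is a planar ribbon graph (its surface has genus zero) with only positive edges and with underlying abstract graph $\Gamma$, then $$J_L(t)=(-1)^{w(\widetilde L)}\,t^{\frac{3w(\widetilde L)-r(\widehat G)+n(\widehat G)}{4}}\,\bigl(-t^{1/2}-t^{-1/2}\bigr)^{k(\widehat G)-1}\,T_\Gamma(-t,-t^{-1}),$$ where $T_\Gamma$ is the classical Tutte polynomial of $\Gamma$.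
   Context: A ribbon graph $G$ is a graph $\Gamma=(V,E)$ (loops and multiple edges allowed) with a fixed cyclic order of edge-ends at each vertex; equivalently a compact surface with boundary that is a union of closed vertex discs and edge ribbons meeting in disjoint line segments, each segment on the boundary of exactly one vertex disc and one edge ribbon, each ribbon containing exactly two segments. The surface $G$ is oriented (counterclockwise rotation). For a ribbon graph $F$: $v(F),e(F),k(F)$ are the numbers of vertices, edges, connected components; $r(F)=v(F)-k(F)$, $n(F)=e(F)-r(F)$; $\mathrm{bc}(F)$ is the number of boundary components of the surface $F$. A spanning subgraph contains all vertices and a subset of edges; $\mathcal F(G)$ is the set of them; $\overline F=G-F$ is the complementary spanning subgraph. A signed ribbon graph $\widehat G$ is $G$ with a sign function $\varepsilon:E\to\{\pm1\}$; $r(\widehat G),n(\widehat G),k(\widehat G)$ mean those of $G$; $e_-(F)$ is the number of edges of $F$ with sign $-1$, and $s(F)=\tfrac12\bigl(e_-(F)-e_-(\overline F)\bigr)$. The signed Bollobás–Riordan polynomial is $$R_{\widehat G}(x,y,z)=\sum_{F\in\mathcal F(G)}x^{r(G)-r(F)+s(F)}\,y^{n(F)-s(F)}\,z^{k(F)-\mathrm{bc}(F)+n(F)}.$$ Diagrams and Kauffman bracket: for a link in $G\times I$ ($I=[0,1]$) in general position w.r.t. projection to $G$, a diagram is its projected immersed curve with over/under information at finitely many double points. At a crossing the $A$-splitting joins the two local regions swept by the overcrossing arc rotated according to the orientation of $G$ until it reaches the undercrossing arc; the $B$-splitting joins the other two. A state $S$ chooses a splitting at each crossing; $\alpha(S),\beta(S)$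 count $A$- and $B$-splittings, $\delta(S)$ counts components of the resulting curve. $\langle\widetilde L\rangle(A,B,d)=\sum_S A^{\alpha(S)}B^{\beta(S)}d^{\delta(S)-1}$. Medial links: the medial graph $H_G$ in $G$ has one 4-valent vertex at the middle of each edge ribbon, its edges running along the ribbons and turning at vertex discs to the next ribbon in the cyclic order. Regions of $G\setminus H_G$ containing a vertex of $\Gamma$ are black, others white. The natural diagram $\widetilde L_G$ makes each vertex of $H_G$ a crossing so that the overcrossing branch, rotated according to the orientation of $G$ until the undercrossing branch, sweeps out the black regions. The signed medial link diagram $\widetilde L_{\widehat G}$ is obtained from $\widetilde L_G$ by switching overcrossing and undercrossing at crossings of negative edges. Jones polynomial: for an oriented link $L$ with diagram $\widetilde L$, the writhe $w(\widetilde L)$ is the sum over crossings of the standard crossing signs ($\pm1$) determined by the orientation, and $J_L(t):=(-1)^{w(\widetilde L)}t^{3w(\widetilde L)/4}\langle\widetilde L\rangle\bigl(t^{-1/4},t^{1/4},-t^{1/2}-t^{-1/2}\bigr)$. *)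

From HB Require Import structures.
From mathcomp Require Import all_boot all_order all_algebra all_fingroup.
Unset Printing Implicit Defensive.
Import Order.TTheory GRing.Theory Num.Theory.
Local Open Scope ring_scope.

(* A signed ribbon graph given as a combinatorial map:
   - darts (half-edges / edge-ends),
   - [rot]: counterclockwise cyclic order of edge-ends at each vertex
     (vertices = cycles of [rot]),
   - [einv]: fixed-point-free involution pairing the two ends of each edge
     (edges = orbits of [einv]),
   - [neg d]: the edge containing d has sign -1. *)
Record sribbon := SRibbon {
  dart : finType;
  rot : {perm dart};
  einv : dart -> dart;
  neg : dart -> bool;
  einvK : involutive einv;
  einv_fpf : forall d, einv d != d;
  neg_einv : forall d, neg (einv d) = neg d }.

Set Implicit Arguments. Unset Strict Implicit.

Section RibbonDefs.
Variable G : sribbon.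
Local Notation D := (dart G).

(* spanning subgraphs = sets of darts closed under einv (unions of edges) *)
Definition inv_closed (F : {set D}) : bool :=
  [forall d, (d \in F) ==> (einv G d \in F)].

Definition nverts : nat := fcard (rot G) D.
Definition nedges (F : {set D}) : nat := #|F| %/ 2.

(* connected components of the spanning subgraph F (all vertices of G) *)
Definition comp_rel (F : {set D}) : rel D :=
  fun x y => (y == rot G x) || ((x \in F) && (y == einv G x)).
Definition ncomp (F : {set D}) : nat := n_comp (comp_rel F) D.

Definition rank (F : {set D}) : int := (nverts%:Z - (ncomp F)%:Z)%R.
Definition nullity (F : {set D}) : int := ((nedges F)%:Z - rank F)%R.

Definition rotF (F : {set D}) (d : D) : D :=
  head d [seq x <- traject (rot G) (rot G d) #|D| | x \in F].
Definition face (F : {set D}) (d : D) : D :=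
  if d \in F then rotF F (einv G d) else d.
Definition nfaces (F : {set D}) : nat := fcard (face F) F.
(* vertices of G carrying no edge of F: each is a disc contributing one
   boundary component *)
Definition iso_verts (F : {set D}) : nat :=
  fcard (rot G) [pred d | [forall x in F, ~~ fconnect (rot G) d x]].
Definition bc (F : {set D}) : nat := nfaces F + iso_verts F.

Definition negs (F : {set D}) : nat := #|[set d in F | neg G d]| %/ 2.

Definition genus2 : int :=
  (2 * (ncomp setT)%:Z - nverts%:Z + (nedges setT)%:Z - (bc setT)%:Z)%R.
Definition planar : bool := genus2 == 0.

(* signed Bollobas--Riordan polynomial evaluated at (x,y,z); the exponents
   r(G)-r(F)+s(F), n(F)-s(F) are half-integers, x^(m/2) is read as
   (sqrtC x)^m (principal square root). *)
Definition twice_s (F : {set D}) : int := ((negs F)%:Z - (negs (~: F))%:Z)%R.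
Definition BR_eval (C : numClosedFieldType) (x y z : C) : C :=
  \sum_(F : {set D} | inv_closed F)
     sqrtC x ^ (2 * (rank setT - rank F) + twice_s F)
   * sqrtC y ^ (2 * nullity F - twice_s F)
   * z ^ ((ncomp F)%:Z - (bc F)%:Z + nullity F).

Definition tutte (C : numClosedFieldType) (x y : C) : C :=
  \sum_(F : {set D} | inv_closed F)
     (x - 1) ^ (rank setT - rank F) * (y - 1) ^ (nullity F).

End RibbonDefs.

(* A link diagram on an oriented surface, combinatorially: a finite set of
   crossing ends; [dccw] rotates counterclockwise among the 4 ends of a
   crossing (crossings = orbits of dccw); [darc] pairs ends joined by an arc
   of the diagram; [dover e] says e is an end of the overcrossing branch. *)
Unset Implicit Arguments.
Record diagram := Diagram {
  dE : finType;
  dccw : dE -> dE;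
  darc : dE -> dE;
  dover : dE -> bool }.

Set Implicit Arguments.
Section DiagramDefs.
Variable Dg : diagram.
Local Notation E := (dE Dg).

(* states: a splitting (true = A, false = B) per crossing *)
Definition state_ok (s : {ffun E -> bool}) : bool :=
  [forall e, s (dccw Dg e) == s e].

(* local partner of the end e after splitting: the A-splitting joins the two
   regions swept by the overcrossing arc turning counterclockwise, i.e. joins
   over end e to ccw^-1 e and under end e to ccw e; B the other way. *)
Definition split (s : {ffun E -> bool}) (e : E) : E :=
  if s e == dover Dg e then dccw Dg (dccw Dg (dccw Dg e)) else dccw Dg e.

Definition state_rel (s : {ffun E -> bool}) : rel E :=
  fun e f => (f == darc Dg e) || (f == split s e).
Definition delta (s : {ffun E -> bool}) : nat := n_comp (state_rel s) E.
Definition alpha (s : {ffun E -> bool}) : nat := #|[set e | s e]| %/ 4.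
Definition beta (s : {ffun E -> bool}) : nat := #|[set e | ~~ s e]| %/ 4.

Definition kbracket (C : numFieldType) (A B d : C) : C :=
  \sum_(s : {ffun E -> bool} | state_ok s)
     A ^+ alpha s * B ^+ beta s * d ^ ((delta s)%:Z - 1).

(* an orientation: [o e] = the oriented curve leaves the crossing at end e *)
Definition is_orientation (o : E -> bool) : Prop :=
  forall e, o (dccw Dg (dccw Dg e)) = ~~ o e /\ o (darc Dg e) = ~~ o e.

(* writhe: at each crossing, with outgoing over end eo, the crossing is
   positive iff the outgoing under end is ccw eo (right-hand rule w.r.t. the
   orientation of the surface). *)
Definition writhe (o : E -> bool) : int :=
  \sum_(e | dover Dg e && o e) (if o (dccw Dg e) then 1 else -1).

Definition jones (C : numClosedFieldType) (o : E -> bool) (t : C) : C :=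
  let q := sqrtC (sqrtC t) in
  (-1) ^ writhe o * q ^ (3 * writhe o)
  * kbracket q^-1 q (- sqrtC t - (sqrtC t)^-1).

End DiagramDefs.

(* Ends of the crossing of edge
   {x, einv x}: (x,true) heads to the corner between x and rot x,
   (x,false) to the corner between rot^-1 x and x.  Counterclockwise order
   at the crossing: (einv x,false),(x,true),(x,false),(einv x,true).
   Regions between (x,true),(x,false) and between (einv x,true),(einv x,false)
   are black; for a positive edge the overcrossing branch is the one through
   the true-ends (turning it counterclockwise sweeps the black regions);
   negative edges switch over and under. *)
Definition medial (G : sribbon) : diagram :=
  @Diagram (dart G * bool)%type
    (fun p => if p.2 then (p.1, false) else (einv G p.1, true))
    (fun p => if p.2 then (rot G p.1, false) else ((rot G)^-1%g p.1, true))
    (fun p => p.2 (+) neg G p.1).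

(* A state of the medial diagram is the same thing as a spanning subgraph F:
   split A at the crossing of an edge iff the edge lies in F xor is negative.
   The state curves then run along the boundary of the ribbon subgraph F, so
   delta = bc(F); both are the cycles of the permutation "turn at the vertex,
   cross the edge if it lies in F", whose cycles through F are the faces of F
   and whose other cycles are the isolated vertices.  Counting splittings
   gives beta - alpha = e(G) - 2 e(F) + 2 s(F), and the substitution
   x = -t-1, y = -1/t-1, z = 1/d matches each Bollobas-Riordan monomial with
   the corresponding bracket term up to a global factor.
   The exponent of z is twice the genus of F.  Adding an edge to F multiplies
   the boundary permutation by a transposition, which makes the genus
   monotone in F; so when G is planar every F has genus zero, and when G is
   unsigned s(F) = 0, leaving the Tutte polynomial. *)

From Pilot Require Import Defs.
From mathcomp Require Import all_boot all_order all_algebra all_fingroup zify ring.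
Import Order.TTheory GRing.Theory Num.Theory.
Set Implicit Arguments. Unset Strict Implicit. Unset Printing Implicit Defensive.

Lemma head_filter (T : Type) (x0 : T) (p : pred T) (s : seq T) :
  head x0 (filter p s) = nth x0 s (find p s).
Proof. by elim: s => //= y s IHs; case: (p y). Qed.

Section FixedPointFreeInvolution.
Variables (T : finType) (f : T -> T).
Hypotheses (fK : involutive f) (f_fpf : forall x, f x != x).

Lemma even_card_invariant (S : {set T}) :
  (forall x, (f x \in S) = (x \in S)) -> ~~ odd #|S|.
Proof.
move: {2}#|S| (erefl #|S|) => n; elim/ltn_ind: n S => n IHn S nE S_f.
have [-> | [x xS]] := set_0Vmem S; first by rewrite cards0.
have sub_x : [set x; f x] \subset S.
  by apply/subsetP => y; rewrite !inE => /orP[]/eqP->; rewrite ?S_f.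
have card_x : #|[set x; f x]| = 2 by rewrite cards2 eq_sym f_fpf.
have cardS : #|S| = (#|S :\: [set x; f x]| + 2)%N.
  by rewrite cardsD (setIidPr sub_x) card_x subnK // -card_x subset_leq_card.
rewrite cardS addn2 /= negbK; apply: IHn erefl _ => [|y]; first by rewrite -nE cardS addn2.
by rewrite !inE S_f (inj_eq (can_inj fK)) (can2_eq fK fK) orbC.
Qed.

End FixedPointFreeInvolution.

Section ConnectedComponents.
Variables T T' : finType.

Lemma connect_homo (f : T -> T') (e : rel T) (e' : rel T') :
  (forall x y, e x y -> connect e' (f x) (f y)) ->
  forall x y, connect e x y -> connect e' (f x) (f y).
Proof.
move=> fe x y /connectP[p e_p ->]; elim: p x e_p => //= z p IHp x /andP[exz e_p].
exact: connect_trans (fe _ _ exz) (IHp _ e_p).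
Qed.

Lemma connect_sym_of (e : rel T) :
  (forall x y, e x y -> connect e y x) -> connect_sym e.
Proof.
move=> e_rev; suff conn_rev x y : connect e x y -> connect e y x.
  by move=> x y; apply/idP/idP; apply: conn_rev.
move=> /connectP[p e_p ->]; elim: p x e_p => //= z p IHp x /andP[exz e_p].
exact: connect_trans (IHp _ e_p) (e_rev _ _ exz).
Qed.

Lemma eq_connect_in (e e' : rel T) (a : {pred T}) :
  {in a, e =2 e'} -> (forall x y, x \in a -> e x y -> y \in a) ->
  {in a, connect e =2 connect e'}.
Proof.
move=> ee' cl_a x a_x y; apply/idP/idP => /connectP[p pth ->] {y};
  elim: p x a_x pth => //= z p IHp x a_x /andP[exz pth].
- by apply: connect_trans (IHp _ (cl_a _ _ a_x exz) pth); rewrite connect1 // -ee'.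
- have exz' : e x z by rewrite ee'.
  by apply: connect_trans (IHp _ (cl_a _ _ a_x exz') pth); rewrite connect1.
Qed.

Lemma eq_n_comp_in (e e' : rel T) (a : {pred T}) :
  {in a, connect e =2 connect e'} -> n_comp e a = n_comp e' a.
Proof.
move=> ee'; apply: eq_card => x; rewrite !inE.
case a_x: (x \in a); rewrite ?andbF //.
by rewrite /roots /fingraph.root (eq_pick (ee' x a_x)).
Qed.

(* A variant of [adjunction_n_comp] with an arbitrary closed domain [a'] for
   the relation [e'] instead of the preimage of [a]. *)
Lemma n_comp_adjunction (h : T' -> T) (e : rel T) (e' : rel T')
    (a : {pred T}) (a' : {pred T'}) :
  connect_sym e -> connect_sym e' -> closed e a -> closed e' a' ->
  {in a', forall x', h x' \in a} ->
  (forall x, x \in a -> exists2 x', x' \in a' & connect e x (h x')) ->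
  {in a' &, forall x' y', connect e' x' y' = connect e (h x') (h y')} ->
  n_comp e a = n_comp e' a'.
Proof.
move=> sym_e sym_e' cl_a cl_a' h_a' unit_h functor_h.
have ccl_a := closed_connect cl_a; have ccl_a' := closed_connect cl_a'.
have inj_h : {in predI (roots e') a' &, injective (fingraph.root e \o h)}.
  move=> x' y' /andP[/eqP r_x' a_x'] /andP[/eqP r_y' a_y'] /(fingraph.rootP sym_e).
  by rewrite -functor_h // => /(fingraph.rootP sym_e'); rewrite r_x' r_y'.
rewrite /n_comp_mem -(card_in_image inj_h); apply: eq_card => x.
apply/andP/imageP => [[/eqP r_x a_x] | [x' /andP[/eqP r_x' a_x'] ->]]; last first.
  by split; rewrite /= ?roots_root // -(ccl_a _ _ (connect_root _ _)) h_a'.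
have [y' a_y' e_xy] := unit_h x a_x; pose x' := fingraph.root e' y'.
have a_x' : x' \in a' by rewrite -(ccl_a' _ _ (connect_root _ y')).
have e_yx : connect e (h y') (h x') by rewrite -functor_h ?connect_root.
exists x'; first by rewrite inE /= roots_root.
by rewrite /= -(fingraph.rootP sym_e e_yx) -(fingraph.rootP sym_e e_xy).
Qed.

Lemma fconnect_porbit (s : {perm T}) x y : fconnect s x y = (y \in porbit s x).
Proof.
apply/idP/porbitP => [/iter_findex <- | [i ->]]; last by rewrite permX fconnect_iter.
by exists (findex s x y); rewrite permX.
Qed.

Lemma fcard_porbits (s : {perm T}) : fcard s T = #|porbits s|.
Proof.
have sym_s : connect_sym (frel s) by apply: fconnect_sym; apply: perm_inj.
have -> : porbits s = porbit s @: [set x | froots s x].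
  apply/setP => P; apply/imsetP/imsetP => [[x _ ->]|[x _ ->]]; last by exists x.
  exists (froot s x); first by rewrite inE roots_root.
  by apply/eqP; rewrite eq_porbit_mem -fconnect_porbit sym_s connect_root.
rewrite card_in_imset; first by apply: eq_card => x; rewrite !inE andbT.
move=> x y; rewrite !inE => /eqP r_x /eqP r_y /eqP.
by rewrite eq_porbit_mem -fconnect_porbit => /(fingraph.rootP sym_s); rewrite r_x r_y.
Qed.

End ConnectedComponents.

Section BoundaryPermutation.
Variable G : sribbon.
Local Notation D := (dart G).
Local Notation r := (Defs.rot G).
Local Notation ei := (einv G).
Local Notation N := #|D|.

Lemma einv_inj : injective ei. Proof. exact: inv_inj (@einvK G). Qed.

Definition edge_swap_fun (F : {set D}) (x : D) : D :=
  if (x \in F) && (ei x \in F) then ei x else x.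

Lemma edge_swap_inj F : injective (edge_swap_fun F).
Proof.
move=> x y; rewrite /edge_swap_fun.
case: ifP => Fx; case: ifP => Fy; [exact: einv_inj | | | by []].
- by move=> exy; move: Fy; rewrite -exy einvK andbC Fx.
- by move=> exy; move: Fx; rewrite exy einvK andbC Fy.
Qed.

Definition edge_swap F : {perm D} := perm (@edge_swap_inj F).

(* The boundary walk of the ribbon subgraph F (the rotation acts first);
   its cycles are the boundary components of F, see [bc_bdry]. *)
Definition bdry F : {perm D} := (r * edge_swap F)%g.

Lemma bdryE F x : bdry F x = edge_swap F (r x).
Proof. by rewrite permM permE. Qed.

Lemma bdry_sym F : connect_sym (frel (bdry F)).
Proof. exact/fconnect_sym/perm_inj. Qed.

Lemma rot_order_le x : fingraph.order r x <= N.
Proof. exact: max_card. Qed.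

Variable F : {set D}.
Hypothesis Fc : inv_closed F.

Lemma mem_einv x : (ei x \in F) = (x \in F).
Proof.
have F_ei y : y \in F -> ei y \in F by move/forallP: Fc => /(_ y) /implyP.
by apply/idP/idP => [/F_ei|/F_ei //]; rewrite einvK.
Qed.

Lemma edge_swapE x : edge_swap F x = if x \in F then ei x else x.
Proof. by rewrite permE /edge_swap_fun mem_einv andbb. Qed.

Lemma edge_swapK : involutive (edge_swap F).
Proof.
move=> x; rewrite !edge_swapE.
by case: (boolP (x \in F)) => [Fx|/negbTE Fx]; rewrite ?mem_einv Fx ?einvK.
Qed.

Lemma iter_bdry v j : (forall i, 0 < i <= j -> iter i r v \notin F) ->
  iter j (bdry F) v = iter j r v.
Proof.
elim: j => //= j IHj notF; rewrite IHj; last first.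
  by move=> i /andP[i0 ij]; apply: notF; rewrite i0 ltnW.
by rewrite bdryE edge_swapE -iterS (negbTE (notF j.+1 _)) ?leqnn.
Qed.

Lemma rotF_first d n : 0 < n <= N -> iter n r d \in F ->
  exists k, [/\ 0 < k <= N, rotF F d = iter k r d, iter k r d \in F
          & forall i, 0 < i < k -> iter i r d \notin F].
Proof.
case/andP=> n0 nN nF; set s := traject r (r d) N.
have nth_s i : i < N -> nth d s i = iter i.+1 r d.
  by move=> iN; rewrite (set_nth_default (r d)) ?size_traject // nth_traject // iterSr.
have nN' : n.-1 < N by rewrite prednK.
have has_s : has (mem F) s.
  by apply/(has_nthP d); exists n.-1; rewrite ?size_traject // nth_s // prednK.
have fN : find (mem F) s < N by rewrite -(size_traject r (r d) N) -has_find.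
exists (find (mem F) s).+1; split => //.
- by rewrite /rotF head_filter nth_s.
- by rewrite -nth_s //; apply: (nth_find d has_s).
move=> i /andP[i0 ik]; have ik' : i.-1 < find (mem F) s by rewrite -ltnS prednK.
by have := before_find d ik'; rewrite nth_s ?(ltn_trans ik') // prednK //= => ->.
Qed.

Lemma rot_return d : d \in F -> exists2 n, 0 < n <= N & iter n r d \in F.
Proof.
move=> dF; exists (fingraph.order r d); first by rewrite fingraph.order_gt0 rot_order_le.
by rewrite iter_order //; apply: perm_inj.
Qed.

(* Until the walk from [w] meets F again it follows the rotation at the
   vertex of [w]; on F the first return map is [ei \o rotF F], which is
   conjugate to the face map by [ei]. *)
Lemma bdry_return w n : 0 < n <= N -> iter n r w \in F -> exists k,
  [/\ 0 < k, iter k (bdry F) w = ei (rotF F w), rotF F w \in F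
    & forall i, 0 < i < k -> iter i (bdry F) w \notin F].
Proof.
move=> nN nF; have [k [/andP[k0 kN] rE rF notF]] := rotF_first nN nF.
have iterE i : i < k -> iter i (bdry F) w = iter i r w.
  by move=> ik; apply: iter_bdry => j /andP[j0 ji]; rewrite notF // j0 (leq_ltn_trans ji).
exists k; split => // [||i /andP[i0 ik]]; last by rewrite iterE // notF ?i0.
- by rewrite -(prednK k0) iterS iterE ?prednK // bdryE -iterS prednK // edge_swapE rF rE.
- by rewrite rE.
Qed.

Lemma bdry_returnF w : w \in F -> exists k,
  [/\ 0 < k, iter k (bdry F) w = ei (rotF F w), rotF F w \in F
    & forall i, 0 < i < k -> iter i (bdry F) w \notin F].
Proof. by case/rot_return => n; apply: bdry_return. Qed.

Lemma mem_rotF d : d \in F -> rotF F d \in F.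
Proof. by case/bdry_returnF => k []. Qed.

Lemma fconnect_face x y : x \in F -> y \in F ->
  fconnect (face F) x y = fconnect (bdry F) (ei x) (ei y).
Proof.
move=> xF yF; apply/idP/idP.
  move: x y {xF yF}; apply: connect_homo => u _ /eqP <-; rewrite /face.
  case: ifP => uF //; have [k [_ <- _ _]] := bdry_returnF (etrans (mem_einv u) uF).
  exact: fconnect_iter.
move=> /iter_findex; move: (findex _ _ _) => n.
elim/ltn_ind: n x xF => -[_ x _ /= /(congr1 ei)| n IHn x xF]; first by rewrite !einvK => ->.
have exF : ei x \in F by rewrite mem_einv.
have [k [k0 kE _ notF]] := bdry_returnF exF; move=> iterE.
have kn : k <= n.+1.
  rewrite leqNgt; apply/negP => nk; have := notF n.+1.
  by rewrite nk iterE mem_einv yF => /(_ isT).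
move: iterE; rewrite -(subnK kn) iterD kE => /IHn conn.
apply: connect_trans (conn _ (mem_rotF exF)); last by rewrite ltn_subrL k0.
by apply: connect1; rewrite /= /face xF.
Qed.

Lemma face_sym : connect_sym (frel (face F)).
Proof.
apply: connect_sym_of => x _ /eqP <-; rewrite /face.
case: ifP => xF; last exact: connect0.
have yF := mem_rotF (etrans (mem_einv x) xF).
rewrite fconnect_face // bdry_sym -fconnect_face //.
by apply: connect1; rewrite /= /face xF.
Qed.

Lemma face_closed : closed (frel (face F)) F.
Proof.
apply: (intro_closed face_sym) => x _ /eqP <- xF.
by rewrite /face xF mem_rotF ?mem_einv.
Qed.

Local Notation bdryF := (closure (frel (bdry F)) F).

Lemma nfaces_bdry : nfaces F = n_comp (frel (bdry F)) bdryF.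
Proof.
symmetry; apply: (@n_comp_adjunction _ _ ei).
- exact: bdry_sym.
- exact: face_sym.
- exact: (closure_closed (bdry_sym F)).
- exact: face_closed.
- by move=> x xF; rewrite mem_closure ?mem_einv.
- move=> x /existsP[y]; rewrite !inE => /andP[xy yF].
  by exists (ei y); rewrite ?mem_einv ?einvK.
- by move=> x y xF yF; rewrite fconnect_face.
Qed.

Local Notation isolated := [pred d | [forall x in F, ~~ fconnect r d x]].

Lemma bdry_isolated u : u \in isolated -> bdry F u = r u.
Proof.
move=> /forallP/(_ (r u)); rewrite fconnect1 implybF => /negbTE ruF.
by rewrite bdryE edge_swapE ruF.
Qed.

Lemma isolated_closed : closed (frel (bdry F)) isolated.
Proof.
apply: (intro_closed (bdry_sym F)) => u _ /eqP <- u_iso.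
rewrite bdry_isolated //; apply/forallP => x.
by rewrite -(same_fconnect1 (@perm_inj _ r)); apply: (forallP u_iso).
Qed.

Lemma isolatedE x : (x \in isolated) = (x \notin bdryF).
Proof.
apply/idP/idP => [x_iso | x_bdry].
  apply/existsP => -[y]; rewrite !inE => /andP[xy yF].
  have y_iso : y \in isolated by rewrite -(closed_connect isolated_closed xy).
  by move: (forallP y_iso y); rewrite yF connect0.
apply/forallP => y; apply/implyP => yF; apply/negP => xy.
have xF : x \notin F by apply: contra x_bdry; apply: mem_closure.
have n0 : 0 < findex r x y.
  by rewrite lt0n findex_eq0; apply: contraNneq xF => ->.
have nN : findex r x y <= N by rewrite ltnW // (leq_trans (findex_max xy)) ?rot_order_le.
have nF : iter (findex r x y) r x \in F by rewrite iter_findex.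
have [|k [_ kE rF _]] := bdry_return _ nF; first by rewrite n0.
move/negP: x_bdry; apply; apply/existsP; exists (ei (rotF F x)).
by rewrite !inE -{1}kE fconnect_iter mem_einv.
Qed.

Lemma bc_bdry : bc F = fcard (bdry F) D.
Proof.
rewrite /bc (n_compC bdryF) -nfaces_bdry; congr (_ + _).
rewrite /iso_verts (eq_n_comp_r (a' := [predC bdryF])) => [|x]; last first.
  by rewrite !inE -isolatedE.
have rot_bdry : {in isolated, frel r =2 frel (bdry F)}.
  by move=> u u_iso v; rewrite /= bdry_isolated.
apply: eq_n_comp_in => x; rewrite inE -isolatedE => x_iso.
apply: eq_connect_in x_iso => // u v u_iso; rewrite rot_bdry // => /connect1 uv.
by rewrite -(closed_connect isolated_closed uv).
Qed.

End BoundaryPermutation.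

Section MedialStates.
Variable G : sribbon.
Local Notation D := (dart G).
Local Notation r := (Defs.rot G).
Local Notation E := (dE (medial G)).

Definition state_of (F : {set D}) : {ffun E -> bool} :=
  [ffun p : E => (p.1 \in F) (+) neg G p.1].

Definition set_of_state (s : {ffun E -> bool}) : {set D} :=
  [set x | s (x, true) (+) neg G x].

Lemma state_ok_state_of F : state_ok (state_of F) = inv_closed F.
Proof.
apply/idP/idP => [/forallP s_ok | Fc].
  apply/forallP => x; apply/implyP => xF; have := s_ok (x, false).
  by rewrite !ffunE /= neg_einv xF; case: (neg G x); case: (_ \in F).
by apply/forallP => -[x []]; rewrite !ffunE //= neg_einv (mem_einv Fc).
Qed.

Lemma state_ofK s : state_ok s -> state_of (set_of_state s) = s.
Proof.
move=> /forallP s_ok; apply/ffunP => -[x b]; rewrite !ffunE inE /= addbK.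
by case: b => //; rewrite -(eqP (s_ok (x, true))).
Qed.

Lemma set_of_stateK F : set_of_state (state_of F) = F.
Proof. by apply/setP => x; rewrite inE ffunE addbK. Qed.

Variable F : {set D}.
Hypothesis Fc : inv_closed F.

Lemma split_state_of x b :
  Defs.split (state_of F) ((x, b) : E) = ((edge_swap F x, ~~ b) : E).
Proof.
rewrite /Defs.split ffunE /= (edge_swapE Fc).
by case: b; case: (x \in F); case: (neg G x); rewrite //= einvK.
Qed.

Lemma state_rel_sym : connect_sym (state_rel (state_of F)).
Proof.
have darcK : involutive (darc (medial G)) by case=> x [] /=; rewrite ?permK ?permKV.
have splitK : involutive (Defs.split (state_of F)).
  by case=> x b; rewrite !split_state_of (edge_swapK Fc) negbK.
apply: sym_connect_sym => u v; rewrite /state_rel.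
by rewrite !(eq_sym v) (can2_eq darcK darcK) (can2_eq splitK splitK).
Qed.

(* The state curves of [state_of F] run along the boundary of F: the end
   [(x, true)] follows [bdry F] through the corner after [x]. *)
Definition corner (u : E) : D := if u.2 then u.1 else (r^-1)%g u.1.

Lemma connect_corner u : connect (state_rel (state_of F)) u (corner u, true).
Proof. by case: u => x [] /=; rewrite ?connect0 // connect1 //= /state_rel eqxx. Qed.

Lemma delta_state_of : delta (state_of F) = fcard (bdry F) D.
Proof.
rewrite /delta (eq_n_comp_r (a' := predT)) //.
rewrite (@adjunction_n_comp _ _ (fun x => (x, true)) _ _ state_rel_sym (bdry_sym F)) //.
split=> [u _ | x y _]; first by exists (corner u); apply: connect_corner.
apply/idP/idP.
  apply: (connect_homo (f := fun x : D => (x, true) : E)) => u _ /eqP <-.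
  apply: (@connect_trans _ _ (r u, false)).
    by rewrite connect1 //= /state_rel eqxx.
  by rewrite connect1 //= /state_rel split_state_of bdryE eqxx orbT.
apply: (connect_homo (f := corner)) => -[u b] [v c].
rewrite /state_rel split_state_of; case: b => /= /orP[] /eqP[-> ->]; rewrite /corner /=.
- by rewrite permK connect0.
- by rewrite bdry_sym connect1 //= bdryE permKV (edge_swapK Fc).
- exact: connect0.
- by rewrite connect1 //= bdryE permKV.
Qed.

End MedialStates.

Local Open Scope ring_scope.

Lemma kbracket_medial (G : sribbon) (C : numFieldType) (A B d : C) :
  kbracket (medial G) A B d =
  \sum_(F : {set dart G} | inv_closed F)
    A ^+ alpha (state_of F) * B ^+ beta (state_of F) * d ^ ((bc F)%:Z - 1).
Proof.
rewrite /kbracket (reindex_onto (@state_of G) (@set_of_state G)) => [|s /state_ofK //].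
apply: eq_big => F; first by rewrite state_ok_state_of set_of_stateK eqxx andbT.
by case/andP; rewrite state_ok_state_of => Fc _; rewrite delta_state_of // bc_bdry.
Qed.

Section Genus.
Variable G : sribbon.
Local Notation D := (dart G).
Local Notation r := (Defs.rot G).
Local Notation ei := (einv G).

Definition genus2_of (F : {set D}) : int :=
  2 * (ncomp F)%:Z - (nverts G)%:Z + (nedges F)%:Z - (bc F)%:Z.

Lemma comp_rel_sym (F : {set D}) : inv_closed F -> connect_sym (comp_rel F).
Proof.
move=> Fc; apply: connect_sym_of => x _ /orP[/eqP -> | /andP[xF /eqP ->]].
  apply: (connect_sub (e := frel r)) => [u _ /eqP <- |].
    by rewrite connect1 //= /comp_rel eqxx.
  by rewrite (fconnect_sym (@perm_inj _ r)) fconnect1.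
by rewrite connect1 //= /comp_rel einvK (mem_einv Fc) xF eqxx orbT.
Qed.

Lemma connect_bdry_comp (F : {set D}) x y : inv_closed F ->
  fconnect (bdry F) x y -> connect (comp_rel F) x y.
Proof.
move=> Fc; apply: connect_sub => u _ /eqP <-; rewrite bdryE (edge_swapE Fc).
apply: (@connect_trans _ _ (r u)); first by rewrite connect1 //= /comp_rel eqxx.
by case: ifP => // ruF; rewrite connect1 //= /comp_rel ruF eqxx orbT.
Qed.

Section AddEdge.
Variable F : {set D}.
Hypothesis Fc : inv_closed F.
Variable a : D.
Hypothesis aF : a \notin F.
Local Notation F' := (F :|: [set a; ei a]).

Let eaF : ei a \notin F. Proof. by rewrite (mem_einv Fc). Qed.
Let a_ea : a != ei a. Proof. by rewrite eq_sym einv_fpf. Qed.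

Lemma inv_closed_add_edge : inv_closed F'.
Proof.
apply/forallP => x; apply/implyP; rewrite !inE => /orP[xF|/orP[]/eqP->];
  by rewrite ?(mem_einv Fc) ?xF ?einvK ?eqxx ?orbT.
Qed.

Lemma bdry_add_edge : bdry F' = (bdry F * tperm a (ei a))%g.
Proof.
apply/permP => x; rewrite permM !bdryE (edge_swapE inv_closed_add_edge) (edge_swapE Fc).
move: (r x) => y; rewrite !inE; case: (boolP (y \in F)) => yF /=.
  by rewrite tpermD //; [apply: contraNneq aF | apply: contraNneq eaF] => ->;
    rewrite (mem_einv Fc).
case: (eqVneq y a) => [->|ya] /=; first by rewrite tpermL.
case: (eqVneq y (ei a)) => [->|yea] /=; first by rewrite tpermR einvK.
by rewrite tpermD // eq_sym.
Qed.

(* Multiplying by a transposition splits one cycle or merges two. *)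
Lemma bc_add_edge : (bc F' + (~~ fconnect (bdry F) (ei a) a).*2 = (bc F).+1)%N.
Proof.
rewrite bc_bdry ?inv_closed_add_edge // bc_bdry // !fcard_porbits bdry_add_edge.
rewrite -porbitsV invMg tpermV -(porbitsV (bdry F)).
have := porbits_mul_tperm (bdry F)^-1 a (ei a).
by rewrite porbitV -fconnect_porbit a_ea addn1.
Qed.

Lemma comp_rel_add_edge u v :
  comp_rel F' u v = comp_rel F u v || (u \in [set a; ei a]) && (v == ei u).
Proof. by rewrite /comp_rel in_setU; case: (v == r u) => //=; rewrite andb_orl. Qed.

Lemma ncomp_add_edge_connected :
  connect (comp_rel F) a (ei a) -> ncomp F' = ncomp F.
Proof.
move=> a_ea_conn; apply: eq_n_comp => x y; apply/idP/idP; apply: connect_sub => u v.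
  rewrite comp_rel_add_edge => /orP[/connect1 // |].
  rewrite !inE => /andP[/orP[] /eqP -> /eqP ->] //.
  by rewrite einvK (comp_rel_sym Fc).
by move=> uv; rewrite connect1 // comp_rel_add_edge uv.
Qed.

Lemma ncomp_add_edge_le : (ncomp F <= (ncomp F').+1)%N.
Proof.
have sym_F := comp_rel_sym Fc; have sym_F' := comp_rel_sym inv_closed_add_edge.
set c := closure (comp_rel F) (pred2 a (ei a)).
have cl_c : closed (comp_rel F) c by apply: closure_closed.
have a_c : a \in c by rewrite mem_closure // !inE eqxx.
have ea_c : ei a \in c by rewrite mem_closure // !inE eqxx orbT.
have cl_c' : closed (comp_rel F') c.
  apply: (intro_closed sym_F') => u v.
  rewrite comp_rel_add_edge => /orP[uv | ]; first by rewrite (cl_c _ _ uv).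
  by rewrite !inE => /andP[/orP[]/eqP-> /eqP->] _; rewrite ?einvK.
have outside_c : n_comp (comp_rel F) [predC c] = n_comp (comp_rel F') [predC c].
  apply: eq_n_comp_in => x x_c y; apply: (eq_connect_in _ _ x_c) => [u u_c v | u v u_c uv].
    have u_edge : u \notin [set a; ei a].
      by rewrite !inE; apply: contra u_c => /orP[]/eqP->.
    by rewrite comp_rel_add_edge (negbTE u_edge) orbF.
  by rewrite inE -(cl_c _ _ uv).
rewrite /ncomp (n_compC c) (n_compC c (comp_rel F')) outside_c -addSn leq_add2r.
have : (n_comp (comp_rel F) c <= 2)%N by rewrite n_comp_closure2 //; case: connect.
move/leq_trans; apply; rewrite ltnS /n_comp_mem; apply/card_gt0P.
exists (fingraph.root (comp_rel F') a); rewrite !inE roots_root //=.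
by rewrite -(closed_connect cl_c' (connect_root _ a)).
Qed.

Lemma nedges_add_edge : nedges F' = (nedges F).+1.
Proof.
rewrite /nedges cardsU disjoint_setI0; last first.
  rewrite disjoint_sym; apply/pred0P => x; rewrite !inE.
  by apply/negP => /andP[/orP[]/eqP-> ]; [apply/negP: aF | apply/negP: eaF].
by rewrite cards0 subn0 cards2 a_ea; lia.
Qed.

(* If [a] and [ei a] lie on one boundary cycle of F, they are connected in F
   and the new edge splits that cycle; otherwise it merges two cycles and
   joins at most two components. *)
Lemma genus2_of_add_edge : genus2_of F <= genus2_of F'.
Proof.
rewrite /genus2_of nedges_add_edge; have bcE := bc_add_edge.
case: (boolP (fconnect (bdry F) (ei a) a)) bcE => [ea_a | _] /= bcE.
  rewrite ncomp_add_edge_connected; last by rewrite (comp_rel_sym Fc) connect_bdry_comp.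
  lia.
have := ncomp_add_edge_le; lia.
Qed.

End AddEdge.

Lemma genus2_of_mono (F1 F2 : {set D}) : inv_closed F1 -> inv_closed F2 ->
  F1 \subset F2 -> genus2_of F1 <= genus2_of F2.
Proof.
move=> F1c F2c; move: {2}#|F2 :\: F1| (erefl #|F2 :\: F1|) => n.
elim/ltn_ind: n F1 F1c => n IHn F1 F1c nE F12.
have [F21_0 | [a]] := set_0Vmem (F2 :\: F1).
  suff -> : F1 = F2 by [].
  by apply/eqP; rewrite eqEsubset F12 -setD_eq0 F21_0 /=.
rewrite inE => /andP[aF1 aF2]; have eaF2 : ei a \in F2 by rewrite (mem_einv F2c).
apply: le_trans (genus2_of_add_edge F1c aF1) _.
apply: (IHn #|F2 :\: (F1 :|: [set a; ei a])|) => //.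
- rewrite -nE; apply/proper_card; rewrite properE setDS ?subsetUl //=.
  by apply/subsetPn; exists a; rewrite !inE ?eqxx ?orbT ?aF1 ?aF2.
- exact: inv_closed_add_edge.
- by rewrite subUset F12; apply/subsetP => x; rewrite !inE => /orP[]/eqP->.
Qed.

Lemma genus2_of_set0 : genus2_of set0 = 0.
Proof.
have ncomp0 : ncomp (set0 : {set D}) = nverts G.
  apply: eq_n_comp => x y; apply: eq_connect => u v.
  by rewrite /comp_rel inE andFb orbF eq_sym.
have nfaces0 : nfaces (set0 : {set D}) = 0%N by apply: eq_card0 => x; rewrite !inE andbF.
have iso_verts0 : iso_verts (set0 : {set D}) = nverts G.
  by apply: eq_n_comp_r => x; rewrite !inE; apply/forallP => y; rewrite inE.
rewrite /genus2_of /bc /nedges cards0 div0n ncomp0 nfaces0 iso_verts0; lia.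
Qed.

(* Genus is monotone and squeezed between F = set0 and F = setT. *)
Lemma genus2_of_planar F : planar G -> inv_closed F -> genus2_of F = 0.
Proof.
move=> /eqP planarG Fc; change (genus2_of [set: D] = 0) in planarG.
have setTc : inv_closed [set: D] by apply/forallP => x; rewrite !inE.
have set0c : inv_closed (set0 : {set D}) by apply/forallP => x; rewrite inE.
have le_T := genus2_of_mono Fc setTc (subsetT F).
have ge_0 := genus2_of_mono set0c Fc (sub0set F).
by apply/eqP; rewrite eq_le -{1}planarG le_T -genus2_of_set0 ge_0.
Qed.

End Genus.

Section StateExponents.
Variable G : sribbon.
Local Notation D := (dart G).
Local Notation E := (dE (medial G)).
Variable F : {set D}.
Hypothesis Fc : inv_closed F.

Let ndarts b c := #|[set x : D | ((x \in F) == b) && (neg G x == c)]|.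

Lemma card_by_cases (P : bool -> bool -> bool) (A : {set D}) :
  A =i [set x | P (x \in F) (neg G x)] ->
  #|A| = (P true true * ndarts true true + P true false * ndarts true false
          + P false true * ndarts false true + P false false * ndarts false false)%N.
Proof.
move=> /eq_card->.
have card_case b c :
    #|[set x : D | P (x \in F) (neg G x) && ((x \in F) == b) && (neg G x == c)]| =
    (P b c * ndarts b c)%N.
  case Pbc: (P b c); rewrite ?mul1n ?mul0n; [apply: eq_card | apply: eq_card0] => x;
    rewrite !inE; move: (x \in F) (neg G x) => u v;
    by case: u v b c Pbc => [] [] [] [] Pbc; rewrite ?andbT ?andbF ?Pbc.
set A' := [set x | P _ _]; set inF := [set x : D | x \in F]; set N := [set x : D | neg G x].
rewrite -(cardsID inF A') -(cardsID N (A' :&: inF)) -(cardsID N (A' :\: inF)).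
rewrite !addnA -!card_case.
by congr (_ + _ + _ + _); apply: eq_card => x; rewrite !inE;
  case: (x \in F); case: (neg G x); rewrite ?andbT ?andbF.
Qed.

Lemma ndarts_double b c : exists h, ndarts b c = (2 * h)%N.
Proof.
have even_ndarts : ~~ odd (ndarts b c).
  apply: (even_card_invariant (@einvK G) (@einv_fpf G)) => x.
  by rewrite !inE (mem_einv Fc) neg_einv.
exists (ndarts b c)./2.
by rewrite -{1}[ndarts b c]odd_double_half (negbTE even_ndarts) -muln2 mulnC.
Qed.

Lemma card_medial_ends (p : pred D) :
  #|[set u : E | p u.1]| = (2 * #|[set x | p x]|)%N.
Proof.
have -> : [set u : E | p u.1] = setX [set x | p x] [set: bool].
  by apply/setP => -[x b]; rewrite !inE andbT.
by rewrite cardsX cardsT card_bool mulnC.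
Qed.

(* The A-splittings sit at positive edges of F and negative edges outside F. *)
Lemma beta_sub_alpha_state_of :
  ((beta (state_of F))%:Z - (alpha (state_of F))%:Z =
   (nedges [set: D])%:Z - 2 * (nedges F)%:Z + 2 * twice_s F)%R.
Proof.
have halve (p : pred D) : (#|[set u : E | p u.1]| %/ 4 = #|[set x | p x]| %/ 2)%N.
  by rewrite card_medial_ends -[4%N]/(2 * 2)%N divnMl.
have -> : alpha (state_of F) = (#|[set x | (x \in F) (+) neg G x]| %/ 2)%N.
  by rewrite -halve; congr (_ %/ 4)%N; apply: eq_card => u; rewrite !inE ffunE.
have -> : beta (state_of F) = (#|[set x | ~~ ((x \in F) (+) neg G x)]| %/ 2)%N.
  by rewrite -halve; congr (_ %/ 4)%N; apply: eq_card => u; rewrite !inE ffunE.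
rewrite /twice_s /negs /nedges.
rewrite (@card_by_cases (fun b c => b (+) c) [set x | (x \in F) (+) neg G x]) //.
rewrite (@card_by_cases (fun b c => ~~ (b (+) c)) [set x | ~~ ((x \in F) (+) neg G x)]) //.
rewrite (@card_by_cases (fun _ _ => true) [set: D]) => [|x]; last by rewrite !inE.
rewrite (@card_by_cases (fun b _ => b) F) => [|x]; last by rewrite !inE.
rewrite (@card_by_cases (fun b c => b && c) [set x in F | neg G x]) //.
rewrite (@card_by_cases (fun b c => ~~ b && c) [set x in ~: F | neg G x]) => [|x];
  last by rewrite !inE.
rewrite /= !mul1n !mul0n !addn0 !add0n.
have [h1 ->] := ndarts_double true true; have [h2 ->] := ndarts_double true false.
have [h3 ->] := ndarts_double false true; have [h4 ->] := ndarts_double false false.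
lia.
Qed.

End StateExponents.

Lemma twice_s_unsigned (G : sribbon) (F : {set dart G}) :
  (forall x, ~~ neg G x) -> twice_s F = 0.
Proof.
move=> unsigned; have no_neg (A : {set dart G}) : negs A = 0%N.
  rewrite /negs (eq_card0 (A := [set x in A | neg G x])) // => x.
  by rewrite !inE (negbTE (unsigned x)) andbF.
by rewrite /twice_s !no_neg.
Qed.

Lemma BR_eval_planar_unsigned (C : numClosedFieldType) (G : sribbon) (x y z : C) :
  planar G -> (forall e, ~~ neg G e) -> BR_eval G x y z = tutte G (x + 1) (y + 1).
Proof.
move=> planarG unsigned; apply: eq_bigr => F Fc.
have z_exp : (ncomp F)%:Z - (bc F)%:Z + nullity F = 0.
  by have := genus2_of_planar planarG Fc; rewrite /genus2_of /nullity /rank; lia.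
rewrite twice_s_unsigned // z_exp addr0 subr0 expr0z mulr1 !addrK -!exprz_exp.
by rewrite -[sqrtC x ^ 2]/(sqrtC x ^+ 2) -[sqrtC y ^ 2]/(sqrtC y ^+ 2) !sqrtCK.
Qed.

Section JonesSubstitution.
Variables (C : numClosedFieldType) (t : C).
Hypothesis t_gt0 : 0 < t.
Local Notation q := (sqrtC (sqrtC t)).
Local Notation d := (- sqrtC t - (sqrtC t)^-1).
Local Notation X := (sqrtC (- t - 1)).
Local Notation Y := (sqrtC (- t^-1 - 1)).

Lemma q_neq0 : q != 0. Proof. by rewrite gt_eqF // !sqrtC_gt0. Qed.

Lemma d_neq0 : d != 0.
Proof. by rewrite -opprD oppr_eq0 gt_eqF // addr_gt0 ?invr_gt0 ?sqrtC_gt0. Qed.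

Lemma sqrtC_t : sqrtC t = q ^+ 2. Proof. by rewrite sqrtCK. Qed.

Lemma sqrtC_BR_x : X = q ^+ 2 * Y.
Proof.
rewrite -sqrtC_t -rootCMl ?ltW //; congr sqrtC.
by rewrite mulrBr mulrN mulfV ?gt_eqF // mulr1 addrC.
Qed.

Lemma sqrtC_BR_y_sqr : Y ^+ 2 = d / q ^+ 2.
Proof.
rewrite sqrtCK -sqrtC_t; have t_sqr : t = sqrtC t ^+ 2 by rewrite sqrtCK.
have : sqrtC t != 0 by rewrite gt_eqF ?sqrtC_gt0.
by move: t_sqr; set u := sqrtC t => -> u_neq0; field.
Qed.

Lemma BR_monomial (a b g m : int) : a + b = 2 * m ->
  X ^ a * Y ^ b * d^-1 ^ g = q ^ (2 * a - 2 * m) * d ^ (m - g).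
Proof.
move=> ab_m; have Y_neq0 : Y != 0.
  have : Y ^+ 2 != 0 by rewrite sqrtC_BR_y_sqr mulf_neq0 ?invr_neq0 ?expf_neq0 ?d_neq0 ?q_neq0.
  by apply: contraNneq => ->; rewrite expr0n.
have q2E (z : int) : (q ^+ 2) ^ z = q ^ (2 * z) by rewrite -exprz_exp.
have XY : X ^ a * Y ^ b = q ^ (2 * a) * Y ^ (2 * m).
  by rewrite sqrtC_BR_x expfzMl -mulrA -expfzDr // ab_m q2E.
have Y2m : Y ^ (2 * m) = d ^ m * q ^ (2 * - m).
  by rewrite -exprz_exp -[Y ^ 2]/(Y ^+ 2) sqrtC_BR_y_sqr expfzMl exprz_inv q2E.
have -> : 2 * a - 2 * m = 2 * a + 2 * - m by lia.
by rewrite XY Y2m exprz_inv !expfzDr ?q_neq0 ?d_neq0 //; ring.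
Qed.

Lemma kbracket_medial_term (G : sribbon) (F : {set dart G}) : inv_closed F ->
  let rT := rank [set: dart G] in let nT := nullity [set: dart G] in
  q^-1 ^+ alpha (state_of F) * q ^+ beta (state_of F) * d ^ ((bc F)%:Z - 1)
  = q ^ (- rT + nT) * d ^ ((ncomp [set: dart G])%:Z - 1)
    * (X ^ (2 * (rT - rank F) + twice_s F) * Y ^ (2 * nullity F - twice_s F)
       * d^-1 ^ ((ncomp F)%:Z - (bc F)%:Z + nullity F)).
Proof.
move=> Fc rT nT; have exps := beta_sub_alpha_state_of Fc.
rewrite (@BR_monomial _ _ _ (rT - rank F + nullity F)); last by lia.
rewrite exprVn exprnN exprnP -expfzDr ?q_neq0 // mulrACA -!expfzDr ?q_neq0 ?d_neq0 //.
by congr (q ^ _ * d ^ _); move: exps; rewrite /rT /nT /nullity /rank; lia.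
Qed.

End JonesSubstitution.

Unset Implicit Arguments.

Theorem corollary4p2 (C : numClosedFieldType) (G : sribbon)
    (o : dE (medial G) -> bool) (t : C) :
  0 < t -> is_orientation o ->
  let q := sqrtC (sqrtC t) in
  let w := writhe o in
  let d := - sqrtC t - (sqrtC t)^-1 in
  jones o t
    = (-1) ^ w * q ^ (3 * w - rank [set: dart G] + nullity [set: dart G])
      * d ^ ((ncomp [set: dart G])%:Z - 1)
      * BR_eval G (- t - 1) (- t^-1 - 1) d^-1
  /\ (planar G -> (forall x, ~~ neg G x) ->
      jones o t
        = (-1) ^ w * q ^ (3 * w - rank [set: dart G] + nullity [set: dart G])
          * d ^ ((ncomp [set: dart G])%:Z - 1)
          * tutte G (- t) (- t^-1)).
Proof.
move=> t_gt0 _ q w d.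
have kbracketE : kbracket (medial G) q^-1 q d =
    q ^ (- rank [set: dart G] + nullity [set: dart G]) * d ^ ((ncomp [set: dart G])%:Z - 1)
    * BR_eval G (- t - 1) (- t^-1 - 1) d^-1.
  rewrite kbracket_medial /BR_eval mulr_sumr; apply: eq_bigr => F Fc.
  exact: kbracket_medial_term.
have jonesE : jones o t
    = (-1) ^ w * q ^ (3 * w - rank [set: dart G] + nullity [set: dart G])
      * d ^ ((ncomp [set: dart G])%:Z - 1) * BR_eval G (- t - 1) (- t^-1 - 1) d^-1.
  rewrite /jones -/q -/d kbracketE -!addrA [q ^ (3 * w + _)]expfzDr ?q_neq0 //; ring.
split=> // planarG unsigned.
by rewrite jonesE BR_eval_planar_unsigned // !subrK.
Qed.
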